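(* Let $G\subseteq W(\mathsf D_n)$ be a group satisfying the (H1), relative minimality and minimality conditions, let $O$ be an orbit of $pr(G)$ on $\{1,\dots,n\}$ of size $n'$, with indices labelled so that $O=\{1,\dots,n'\}$. For $g\in G$ let $g_O$ denote the product of those signed permutation cycles of $g$ whose underlying cycles lie in $O$, and define $P_O(g)=g_Oc_{n'+1}$ if $\sigma(g_O)=-1$ and $P_O(g)=g_O$ if $\sigma(g_O)=1$. Then $\overline G_O=\{P_O(g): g\in G\}$ is a group and $P_O:G\to\overline G_O$ is a group homomorphism.
   Context: $W(\mathsf B_m)$ is the group of signed permutations of the symbols $j^\pm$ ($1\le j\le m$), generated by $\mathfrak S_m$ and involutions $c_j$ exchanging $j^\pm$; elements are $c_{j_1}\cdots c_{j_t}\tau$; $pr(c_{j_1}\cdots c_{j_t}\tau)=\tau$; $\sigma(c_{j_1}\cdots c_{j_t}\tau)=(-1)^t$; $W(\mathsf D_m)=\ker\sigma$. Signed permutation cycles of $g$: for each cycle $\gamma$ of $\tau$ (fixed points included), $\beta_\gamma=(\prod_{j_i\in\mathrm{supp}\,\gamma}c_{j_i})\gamma$. $W(\mathsf D_n)$ acts on $\mathrm{Pic}(\bar X)=\bigoplus_{i=-1}^n\mathbb Zl_i$ by: for $g=c_{j_1}\cdots c_{j_t}\tau$ with $s(i)=-1$ iff $i\in\{j_1,\dots,j_t\}$, $\Phi(g)l_0=l_0$, $\Phi(g)l_{-1}=l_{-1}+\frac t2l_0-\sum_{s(i)=-1}l_i$, $\Phi(g)l_v=l_u$ or $l_0-l_u$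 ($u=\tau^{-1}(v)$) according as $s(u)=1$ or $-1$. (H1): $\mathrm H^1(H,\mathrm{Pic}(\bar X))=0$ for all subgroups $H\subseteq G$. Relative minimality: $\mathrm{Pic}(\bar X)^G=\mathbb Zl_0\oplus\mathbb ZK$ with $K=-2(l_{-1}+l_0)+\sum_{i=1}^nl_i$. Minimality: $G$ corresponds to a $k$-minimal conic bundle; in particular, for each $j$, $j^+$ and $j^-$ lie in the same $G$-orbit. $\overline G_O$ is regarded inside $W(\mathsf D_{n'+1})$ (or $W(\mathsf D_{n'})$ if no $c_{n'+1}$ occurs). *)

From HB Require Import structures.
From mathcomp Require Import all_boot all_order all_fingroup all_algebra.
Set Implicit Arguments. Unset Strict Implicit. Unset Printing Implicit Defensive.
Import GRing.Theory.
Local Open Scope ring_scope.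

(* Symbols j^+ / j^- (1 <= j <= m) are encoded as (j, true) / (j, false),
   with j : 'I_m (0-based). Products are mathcomp's:
   (g * h) x = h (g x). *)
Section Defs.

Definition flipS m (x : 'I_m * bool) : 'I_m * bool := (x.1, ~~ x.2).

Definition WB m : {set {perm ('I_m * bool)}} :=
  [set g : {perm ('I_m * bool)} | [forall x, g (flipS x) == flipS (g x)]].

Definition cS m (j : 'I_m) : {perm ('I_m * bool)} := tperm (j, true) (j, false).

(* Writing g = c_{j_1} ... c_{j_t} tau (mathcomp product), the indices j_i are
   exactly the u with g(u^+) = (tau u)^- : s(u) = -1 iff srcneg g u. *)
Definition srcneg m (g : {perm ('I_m * bool)}) (u : 'I_m) : bool := ~~ (g (u, true)).2.

Definition tcount m (g : {perm ('I_m * bool)}) : nat := #|[set u | srcneg g u]|.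

Definition sgnneg m (g : {perm ('I_m * bool)}) : bool := odd (tcount g).

Definition WD m : {set {perm ('I_m * bool)}} := [set g in WB m | ~~ sgnneg g].

Definition prf m (g : {perm ('I_m * bool)}) (i : 'I_m) : 'I_m := (g (i, true)).1.

Definition prinv m (g : {perm ('I_m * bool)}) (v : 'I_m) : 'I_m := ((g^-1)%g (v, true)).1.

(* ---------- Pic(X-bar) = (+)_{i=-1}^n Z l_i, indexed by 'I_n.+2:
   index 0 <-> l_{-1}, index 1 <-> l_0, index i.+2 <-> l_{i+1} (i : 'I_n). *)
Definition Pic n := {ffun 'I_n.+2 -> int}.
Definition im1 n : 'I_n.+2 := ord0.
Definition i0 n : 'I_n.+2 := lift ord0 ord0.
Definition il n (i : 'I_n) : 'I_n.+2 := lift ord0 (lift ord0 i).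
Definition ebas n (k : 'I_n.+2) : Pic n := [ffun j => ((j == k) : nat)%:Z].

Definition Phi_m1 n (g : {perm ('I_n * bool)}) : Pic n :=
  ebas (im1 n) + ebas (i0 n) *~ ((tcount g)./2)%:Z
  - \sum_(i : 'I_n | srcneg g i) ebas (il i).

Definition Phi_l n (g : {perm ('I_n * bool)}) (v : 'I_n) : Pic n :=
  let u := prinv g v in
  if srcneg g u then ebas (i0 n) - ebas (il u) else ebas (il u).

Definition Phi n (g : {perm ('I_n * bool)}) (x : Pic n) : Pic n :=
  Phi_m1 g *~ x (im1 n) + ebas (i0 n) *~ x (i0 n)
  + \sum_(v : 'I_n) Phi_l g v *~ x (il v).

Definition Kcan n : Pic n :=
  (ebas (im1 n) + ebas (i0 n)) *~ (-2) + \sum_(i : 'I_n) ebas (il i).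

(* (H1): H^1(H, Pic) = 0 for all subgroups H of G: every crossed homomorphism
   is principal. *)
Definition H1_cond n (G : {group {perm ('I_n * bool)}}) : Prop :=
  forall H : {group {perm ('I_n * bool)}}, H \subset G ->
  forall f : {perm ('I_n * bool)} -> Pic n,
    {in H &, forall g h, f (g * h)%g = f g + Phi g (f h)} ->
    exists v : Pic n, {in H, forall g, f g = Phi g v - v}.

Definition relmin_cond n (G : {group {perm ('I_n * bool)}}) : Prop :=
  forall x : Pic n, ({in G, forall g, Phi g x = x} <->
    exists a b : int, x = ebas (i0 n) *~ a + Kcan n *~ b).

(* minimality (group-theoretic consequence used in the paper):
   j^+ and j^- lie in the same G-orbit. *)
Definition min_cond n (G : {group {perm ('I_n * bool)}}) : Prop :=
  forall j : 'I_n, exists2 g, g \in G & g (j, true) = (j, false).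

(* ---------- The map P_O, for O = {0,...,n'-1} (paper: {1,...,n'}).
   The target is W(B_{n'+1}); the extra index ord_max (value n') is the
   paper's n'+1. *)
Definition perm_or1 (T : finType) (f : T -> T) : {perm T} :=
  match injectiveP f with
  | ReflectT inj => perm inj
  | ReflectF _ => 1%g
  end.

Definition gO_fun n n' (g : {perm ('I_n * bool)}) (x : 'I_n'.+1 * bool)
  : 'I_n'.+1 * bool :=
  if (nat_of_ord x.1 < n')%N then
    match (insub (nat_of_ord x.1) : option 'I_n) with
    | Some i => let y := g (i, x.2) in (inord (nat_of_ord y.1), y.2)
    | None => x
    end
  else x.

Definition gO n n' (g : {perm ('I_n * bool)}) : {perm ('I_n'.+1 * bool)} :=
  perm_or1 (@gO_fun n n' g).

Definition PO n n' (g : {perm ('I_n * bool)}) : {perm ('I_n'.+1 * bool)} :=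
  if sgnneg (@gO n n' g) then (cS (@ord_max n') * @gO n n' g)%g else @gO n n' g.

End Defs.
Arguments gO_fun {n} n' g x.
Arguments gO {n} n' g.
Arguments PO {n} n' g.

From HB Require Import structures.
From mathcomp Require Import all_boot all_order all_fingroup all_algebra.

Set Implicit Arguments.
Unset Strict Implicit.
Unset Printing Implicit Defensive.

Local Open Scope group_scope.

(* A signed permutation g sends (i, b) to (tau i, b (+) s(i)), so the sign
   changes of g * h are those of g xor those of h transported by tau; hence
   sigma is a homomorphism on W(B_m).  Since O is an orbit of pr(G) it is
   G-stable, and restricting to the symbols over O gives a homomorphism
   g |-> g_O into W(B_{n'+1}) fixing (n'+1)^+ and (n'+1)^-.  The involution
   c_{n'+1} therefore commutes with every g_O, and P_O(g) = c^sigma(g_O) g_O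
   is again a homomorphism. *)

Lemma tperm_commute (T : finType) (x y : T) (p : {perm T}) :
  p x = x -> p y = y -> commute (tperm x y) p.
Proof. by move=> px py; apply/commgP/conjg_fixP; rewrite tpermJ px py. Qed.

Lemma sign_twist_morph (aT rT : finGroupType) (D : {set aT})
    (f : aT -> rT) (s : aT -> bool) (c : rT) :
  c * c = 1 -> {in D, forall x, commute c (f x)} ->
  {in D &, {morph f : x y / x * y}} ->
  {in D &, {morph s : x y / x * y >-> x (+) y}} ->
  {in D &, {morph (fun x => if s x then c * f x else f x) : x y / x * y}}.
Proof.
move=> cc cf fM sM x y Dx Dy /=; rewrite fM // sM //.
case: (s x); case: (s y) => /=.
- by rewrite -mulgA (mulgA (f x)) -(cf x Dx) !mulgA cc mul1g.
- by rewrite mulgA.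
- by rewrite !mulgA (cf x Dx).
- by [].
Qed.

Section SignedPermutations.
Variable m : nat.
Implicit Types (g h : {perm ('I_m * bool)}) (i : 'I_m).

Lemma WD_subset_WB : WD m \subset WB m.
Proof. by apply/subsetP => g; rewrite inE => /andP[]. Qed.

Lemma WB_flip g x : g \in WB m -> g (flipS x) = flipS (g x).
Proof. by rewrite inE => /forallP /(_ x) /eqP. Qed.

Lemma WB_apply g i b : g \in WB m -> g (i, b) = (prf g i, b (+) srcneg g i).
Proof.
rewrite /prf /srcneg => Wg; case: b; first by case: (g (i, true)) => j [].
by rewrite -[(i, false)]/(flipS (i, true)) WB_flip //; case: (g (i, true)) => j [].
Qed.

Lemma prfM g h i : g \in WB m -> h \in WB m ->
  prf (g * h) i = prf h (prf g i).
Proof. by move=> Wg Wh; rewrite {1}/prf permM WB_apply // WB_apply. Qed.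

Lemma srcnegM g h i : g \in WB m -> h \in WB m ->
  srcneg (g * h) i = srcneg g i (+) srcneg h (prf g i).
Proof.
move=> Wg Wh; rewrite {1}/srcneg permM WB_apply // WB_apply //=.
by case: (srcneg g i); case: (srcneg h _).
Qed.

Lemma prf_inj g : g \in WB m -> injective (prf g).
Proof.
move=> Wg i j Eij.
have /perm_inj[] // : g (j, ~~ srcneg g i (+) srcneg g j) = g (i, true).
by rewrite !WB_apply // Eij; case: (srcneg g i); case: (srcneg g j).
Qed.

Lemma sgnnegE g : sgnneg g = \big[addb/false]_i srcneg g i.
Proof.
rewrite /sgnneg /tcount -sum1dep_card big_mkcond /=.
rewrite (big_morph odd oddD (erefl (odd 0))).
by apply: eq_bigr => i _; case: (srcneg g i).
Qed.

Lemma sgnnegM g h : g \in WB m -> h \in WB m ->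
  sgnneg (g * h) = sgnneg g (+) sgnneg h.
Proof.
move=> Wg Wh; rewrite !sgnnegE.
under eq_bigr do rewrite srcnegM //.
by rewrite big_split /= [X in _ = _ (+) X](reindex_inj (prf_inj Wg)).
Qed.

Lemma prf_orbit_stable (G : {group {perm ('I_m * bool)}}) i :
  G \subset WB m ->
  {in G, forall g, {homo prf g : j / j \in [set prf h i | h in G]}}.
Proof.
move=> GW g Gg _ /imsetP[h Gh ->].
by rewrite -prfM ?(subsetP GW) //; apply: imset_f; rewrite groupM.
Qed.

End SignedPermutations.

Section Restriction.
Variables (n n' : nat) (G : {group {perm ('I_n * bool)}}).
Hypothesis G_WB : G \subset WB n.
Hypothesis O_stable : {in G, forall g (i : 'I_n), (i < n')%N -> (prf g i < n')%N}.

Lemma gO_funM g h : g \in G ->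
  gO_fun n' (g * h) =1 gO_fun n' h \o gO_fun n' g.
Proof.
move=> Gg [x b]; rewrite /gO_fun /=.
case: ifP => [xO|xO]; last by rewrite /= xO.
case: insubP => [i _ iE|xn]; last by rewrite /= xO insubN.
have Wg := subsetP G_WB g Gg.
have giO : (prf g i < n')%N by apply: O_stable => //; rewrite iE.
rewrite permM WB_apply //= inordK ?giO //; last exact: ltnW.
case: insubP => [k _ kE|]; last by rewrite ltn_ord.
by have -> : k = prf g i by apply: val_inj.
Qed.

Lemma gO_fun1 : gO_fun n' (1 : {perm ('I_n * bool)}) =1 id.
Proof.
move=> [x b]; rewrite /gO_fun /=; case: ifP => // _.
by case: insubP => // i _ iE; rewrite perm1 /= iE inord_val.
Qed.

Lemma gOE g : g \in G -> gO n' g =1 gO_fun n' g.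
Proof.
move=> Gg x; rewrite /gO /perm_or1; case: injectiveP => [inj | ninj].
  by rewrite permE.
case: ninj; apply: (can_inj (g := gO_fun n' g^-1)) => y.
by rewrite -[LHS]/((_ \o _) y) -gO_funM // mulgV gO_fun1.
Qed.

Lemma gOM : {in G &, {morph gO n' : g h / g * h}}.
Proof.
by move=> g h Gg Gh; apply/permP => x; rewrite permM !gOE ?groupM // gO_funM.
Qed.

Lemma gO_WB g : g \in G -> gO n' g \in WB n'.+1.
Proof.
move=> Gg; rewrite inE; apply/forallP => -[x b]; apply/eqP.
rewrite !gOE // /gO_fun /flipS /=; case: ifP => // _.
case: insubP => // i _ _.
by rewrite -[(i, ~~ b)]/(flipS (i, b)) WB_flip ?(subsetP G_WB).
Qed.

Lemma gO_ord_max g b : g \in G -> gO n' g (ord_max, b) = (ord_max, b).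
Proof. by move=> Gg; rewrite gOE // /gO_fun /= ltnn. Qed.

End Restriction.

Theorem lemma6p1 (n : nat) (G : {group {perm ('I_n * bool)}})
  (HGD : G \subset WD n)
  (HH1 : H1_cond G) (Hrel : relmin_cond G) (Hmin : min_cond G)
  (n' : nat) (Hn' : (n' <= n)%N)
  (HO : exists i : 'I_n,
          [set j : 'I_n | (nat_of_ord j < n')%N] = [set prf g i | g in G]) :
  group_set (PO n' @: G) /\ {in G &, {morph PO n' : x y / (x * y)%g}}.
Proof.
have G_WB := subset_trans HGD (WD_subset_WB n).
have O_stable : {in G, forall g (j : 'I_n), (j < n')%N -> (prf g j < n')%N}.
  case: HO => i Oi g Gg j jO.
  have : j \in [set j : 'I_n | (j < n')%N] by rewrite inE.
  by rewrite Oi => /(prf_orbit_stable G_WB Gg); rewrite -Oi inE.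
have POM : {in G &, {morph PO n' : x y / (x * y)%g}}.
  rewrite /PO; apply: sign_twist_morph.
  - exact: tperm2.
  - by move=> g Gg; apply: tperm_commute; rewrite (gO_ord_max G_WB O_stable).
  - exact: (gOM G_WB O_stable).
  - move=> g h Gg Gh /=.
    by rewrite (gOM G_WB O_stable) // sgnnegM ?(gO_WB G_WB O_stable).
split=> //; rewrite -(morphimEdom (Morphism POM)); exact: groupP.
Qed.
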